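(* There exist constants $C^+,C^->0$ such that for every irrational real number $x$: (a) $B(x)<\infty$ if and only if $B_0(x)+B_0(-x)<\infty$, and in that case $$\bigl|B(x)-2B_0^+(x)\bigr|\le C^+,\qquad\text{where } B_0^+(x)=\tfrac12\bigl(B_0(x)+B_0(-x)\bigr);$$ (b) if $B_0(x)$ and $B_0(-x)$ are both finite, then the series defining $W(x)$ converges and $$\bigl|W(x)-2B_0^-(x)\bigr|\le C^-,\qquad\text{where } B_0^-(x)=\tfrac12\bigl(B_0(x)-B_0(-x)\bigr).$$
   Context: For real $x$ let $\{x\}=x-\lfloor x\rfloor$. The Gauss map is $A(y)=\{1/y\}$ and the by-excess map is $A_0(y)=\lfloor 1/y+1\rfloor-1/y$, for $y\in(0,1)$; for irrational $y\in(0,1)$ both $A(y)$ and $A_0(y)$ are irrational numbers in $(0,1)$ and $A_0(y)=1-A(y)$. Iterates are written $A^j$, $A_0^j$, with $A^0=A_0^0=\mathrm{id}$, and empty products equal $1$. For irrational $x$ put $y=\{x\}$ and define $$B(x)=\sum_{j\ge0}\Bigl(\prod_{k=0}^{j-1}A^k(y)\Bigr)\log\frac{1}{A^j(y)}\in[0,+\infty]\quad(\text{Brjuno function}),$$ $$B_0(x)=\sum_{j\ge0}\Bigl(\prod_{k=0}^{j-1}A_0^k(y)\Bigr)\log\frac{1}{A_0^j(y)}\in[0,+\infty]\quad(\text{semi-Brjuno function}),$$ and the Wilton series $W(x)=\sum_{j\ge0}(-1)^j\Bigl(\prod_{k=0}^{j-1}A^k(y)\Bigr)\log\frac{1}{A^j(y)}$;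 we say $W(x)$ converges if its partial sums converge, and then $W(x)$ denotes the limit. All three are $1$-periodic in $x$ by construction (note that $B_0$ is in general not even). The $j=0$ term of each series is $-\log y$. *)

From Stdlib Require Import Reals Lra.
From Coquelicot Require Import Coquelicot.
Open Scope R_scope.

Definition frac (x : R) : R := x - IZR (Int_part x).

Definition gaussA (y : R) : R := frac (/ y).

Definition gaussA0 (y : R) : R := IZR (Int_part (/ y + 1)) - / y.

Fixpoint iterR (T : R -> R) (j : nat) (y : R) : R :=
  match j with O => y | S j' => T (iterR T j' y) end.

Fixpoint prodIter (T : R -> R) (j : nat) (y : R) : R :=
  match j with O => 1 | S j' => prodIter T j' y * iterR T j' y end.

Definition brjuno_term (T : R -> R) (y : R) (j : nat) : R :=
  prodIter T j y * ln (/ iterR T j y).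

Definition irrational (x : R) : Prop :=
  forall (p q : Z), q <> 0%Z -> x <> IZR p / IZR q.

Definition B_term (x : R) (j : nat) : R := brjuno_term gaussA (frac x) j.
Definition B0_term (x : R) (j : nat) : R := brjuno_term gaussA0 (frac x) j.
Definition W_term (x : R) (j : nat) : R := (-1) ^ j * brjuno_term gaussA (frac x) j.

Definition B_finite (x : R) : Prop := ex_series (B_term x).
Definition B0_finite (x : R) : Prop := ex_series (B0_term x).
Definition W_converges (x : R) : Prop := ex_series (W_term x).
Definition Bval (x : R) : R := Series (B_term x).
Definition B0val (x : R) : R := Series (B0_term x).
Definition Wval (x : R) : R := Series (W_term x).

Definition B0plus (x : R) : R := (B0val x + B0val (- x)) / 2.
Definition B0minus (x : R) : R := (B0val x - B0val (- x)) / 2.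

From Stdlib Require Import Reals Lra Lia ZArith.
From Coquelicot Require Import Coquelicot.
Open Scope R_scope.

(* Write y = {x}, so that {-x} = 1 - y and A0 y = 1 - A y.  For an irrational
   t in (0,1) the by-excess orbit of 1 - t spends floor(1/t) steps with small
   logarithms before reaching 1 - A(A t) with accumulated product t A(t), and the
   B0-sum over such a run differs from the single Brjuno term t log(1 / A t) by at
   most 5.  Hence the B0-series of x and of -x follow alternately the even and
   the odd steps of the Gauss orbit of y: truncated after whole runs, B0(x) +- B0(-x)
   is a partial sum of B(x), resp. W(x), up to a sum of run defects weighted by the
   products of A^k y.  That error is at most 4 * 5, because two Gauss steps multiply
   the weight by y A(y) <= 1/2. *)

Lemma Int_part_unique (n : Z) (z : R) : IZR n <= z < IZR n + 1 -> Int_part z = n.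
Proof.
  intros [Hlo Hhi]. unfold Int_part.
  assert (Hup : (n + 1)%Z = up z) by (apply tech_up; rewrite plus_IZR; lra).
  lia.
Qed.

Lemma frac_bounds (z : R) : 0 <= frac z < 1.
Proof. unfold frac; destruct (base_Int_part z); lra. Qed.

Lemma frac_add_IZR (z : R) (k : Z) : frac (z + IZR k) = frac z.
Proof.
  unfold frac.
  rewrite (Int_part_unique (Int_part z + k)), plus_IZR; [ring|].
  rewrite plus_IZR. destruct (base_Int_part z). lra.
Qed.

Lemma frac_of_bounds (z : R) (n : Z) : IZR n <= z < IZR n + 1 -> frac z = z - IZR n.
Proof. intros H. unfold frac. rewrite (Int_part_unique n z H). reflexivity. Qed.

Lemma gaussA0_eq (y : R) : gaussA0 y = 1 - gaussA y.
Proof.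
  unfold gaussA0, gaussA, frac.
  rewrite (Int_part_unique (Int_part (/ y) + 1)), plus_IZR; [ring|].
  rewrite plus_IZR. destruct (base_Int_part (/ y)). lra.
Qed.

Lemma irrational_neq0 (z : R) : irrational z -> z <> 0.
Proof. intros Hz E. apply (Hz 0%Z 1%Z); [lia|]. rewrite E. simpl. field. Qed.

Lemma irrational_inv (z : R) : irrational z -> irrational (/ z).
Proof.
  intros Hz p q Hq E. pose proof (irrational_neq0 z Hz) as Hz0.
  destruct (Z.eq_dec p 0) as [->|Hp].
  - apply (Rinv_neq_0_compat z Hz0). rewrite E. simpl. unfold Rdiv. ring.
  - apply (Hz q p Hp). rewrite <- (Rinv_inv z), E.
    field. split; apply not_0_IZR; assumption.
Qed.

Lemma irrational_sub_IZR (z : R) (k : Z) : irrational z -> irrational (z - IZR k).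
Proof.
  intros Hz p q Hq E. apply (Hz (p + k * q)%Z q Hq).
  rewrite plus_IZR, mult_IZR. replace z with (z - IZR k + IZR k) by ring. rewrite E.
  field. apply not_0_IZR; assumption.
Qed.

Lemma irrational_opp (z : R) : irrational z -> irrational (- z).
Proof.
  intros Hz p q Hq E. apply (Hz (- p)%Z q Hq).
  rewrite opp_IZR. replace z with (- - z) by ring. rewrite E.
  field. apply not_0_IZR; assumption.
Qed.

Lemma irrational_one_minus (z : R) : irrational z -> irrational (1 - z).
Proof.
  intros Hz. replace (1 - z) with (- (z - IZR 1)) by (simpl; ring).
  apply irrational_opp, irrational_sub_IZR, Hz.
Qed.

Lemma frac_opp (x : R) : irrational x -> frac (- x) = 1 - frac x.
Proof.
  intros Hx. destruct (base_Int_part x) as [Hlo Hhi].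
  assert (Hne : IZR (Int_part x) <> x).
  { intro E. apply (Hx (Int_part x) 1%Z); [lia|]. rewrite E. simpl. field. }
  rewrite (frac_of_bounds _ (- Int_part x - 1)).
  - unfold frac. rewrite minus_IZR, opp_IZR. ring.
  - rewrite minus_IZR, opp_IZR. lra.
Qed.

Definition unit_irrational (z : R) : Prop := 0 < z < 1 /\ irrational z.

Lemma unit_irrational_frac (z : R) : irrational z -> unit_irrational (frac z).
Proof.
  intros Hz. assert (Hf : irrational (frac z)) by apply irrational_sub_IZR, Hz.
  split; [|exact Hf].
  pose proof (frac_bounds z). pose proof (irrational_neq0 _ Hf). lra.
Qed.

Lemma unit_irrational_gaussA (z : R) : unit_irrational z -> unit_irrational (gaussA z).
Proof. intros [_ Hz]. apply unit_irrational_frac, irrational_inv, Hz. Qed.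

Lemma unit_irrational_one_minus (z : R) : unit_irrational z -> unit_irrational (1 - z).
Proof. intros [Hz Hi]. split; [lra|]. apply irrational_one_minus, Hi. Qed.

Lemma unit_irrational_gaussA0 (z : R) : unit_irrational z -> unit_irrational (gaussA0 z).
Proof. intros Hz. rewrite gaussA0_eq. apply unit_irrational_one_minus, unit_irrational_gaussA, Hz. Qed.

Definition partial_quotient (t : R) : nat := Z.to_nat (Int_part (/ t)).

Lemma partial_quotient_spec (t : R) : 0 < t < 1 ->
  (1 <= partial_quotient t)%nat /\ / t - INR (partial_quotient t) = gaussA t.
Proof.
  intros Ht. destruct (base_Int_part (/ t)) as [Hlo Hhi].
  assert (Hinv : 1 < / t) by (rewrite <- Rinv_1; apply Rinv_lt_contravar; lra).
  assert (Hpos : (0 < Int_part (/ t))%Z) by (apply lt_IZR; simpl; lra).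
  assert (HN : INR (partial_quotient t) = IZR (Int_part (/ t)))
    by (unfold partial_quotient; rewrite INR_IZR_INZ, Z2Nat.id by lia; reflexivity).
  split.
  - unfold partial_quotient. lia.
  - unfold gaussA, frac. rewrite HN. reflexivity.
Qed.

Lemma mul_gaussA_le_half (z : R) : 0 < z < 1 -> z * gaussA z <= 1 / 2.
Proof.
  intros Hz. destruct (partial_quotient_spec z Hz) as [Hq Heq].
  pose proof (frac_bounds (/ z)) as HA. fold (gaussA z) in HA.
  assert (H1 : 1 <= INR (partial_quotient z)) by (apply (le_INR 1); exact Hq).
  assert (Hexp : z * gaussA z = 1 - z * INR (partial_quotient z))
    by (rewrite <- Heq; field; lra).
  destruct (Rle_lt_dec (1 / 2) z); nra.
Qed.

Definition log_inv (z : R) : R := ln (/ z).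

Fixpoint orbit_sum (T g : R -> R) (s y : R) (n : nat) : R :=
  match n with
  | O => 0
  | S n' => orbit_sum T g s y n' + s ^ n' * prodIter T n' y * g (iterR T n' y)
  end.

Lemma iterR_succ_r (T : R -> R) (j : nat) (y : R) : iterR T (S j) y = iterR T j (T y).
Proof. induction j as [|j IH]; [reflexivity|]. simpl in *. rewrite IH. reflexivity. Qed.

Lemma prodIter_succ_r (T : R -> R) (j : nat) (y : R) :
  prodIter T (S j) y = y * prodIter T j (T y).
Proof.
  induction j as [|j IH]; simpl; [ring|].
  simpl in IH. rewrite IH, <- iterR_succ_r. simpl. ring.
Qed.

Lemma orbit_sum_succ (T g : R -> R) (s y : R) (n : nat) :
  orbit_sum T g s y (S n) = g y + s * y * orbit_sum T g s (T y) n.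
Proof.
  induction n as [|n IH]; [simpl; ring|].
  change (orbit_sum T g s y (S (S n))) with
    (orbit_sum T g s y (S n) + s ^ S n * prodIter T (S n) y * g (iterR T (S n) y)).
  rewrite IH, prodIter_succ_r, iterR_succ_r. simpl. ring.
Qed.

Lemma orbit_sum_add (T g : R -> R) (s y : R) (a n : nat) :
  orbit_sum T g s y (a + n)
  = orbit_sum T g s y a + s ^ a * prodIter T a y * orbit_sum T g s (iterR T a y) n.
Proof.
  revert y. induction a as [|a IH]; intros y; [simpl; ring|].
  rewrite Nat.add_succ_l, !orbit_sum_succ, IH, prodIter_succ_r, iterR_succ_r. simpl. ring.
Qed.

Lemma sum_n_brjuno_term (T : R -> R) (s y : R) (n : nat) :
  sum_n (fun j => s ^ j * brjuno_term T y j) n = orbit_sum T log_inv s y (S n).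
Proof.
  induction n as [|n IH].
  - rewrite sum_O. simpl. unfold brjuno_term, log_inv. simpl. ring.
  - rewrite sum_Sn, IH. unfold brjuno_term, log_inv, plus. simpl. ring.
Qed.

Section InvariantOrbit.

Variable T : R -> R.
Hypothesis T_unit_irrational : forall z, unit_irrational z -> unit_irrational (T z).

Lemma unit_irrational_iterR (j : nat) (y : R) :
  unit_irrational y -> unit_irrational (iterR T j y).
Proof. intros Hy. induction j; simpl; auto. Qed.

Lemma prodIter_pos (j : nat) (y : R) : unit_irrational y -> 0 < prodIter T j y.
Proof.
  intros Hy. induction j as [|j IH]; simpl; [lra|].
  destruct (unit_irrational_iterR j y Hy) as [Hj _]. nra.
Qed.

Lemma brjuno_term_nonneg (y : R) (j : nat) : unit_irrational y -> 0 <= brjuno_term T y j.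
Proof.
  intros Hy. unfold brjuno_term. apply Rmult_le_pos; [apply Rlt_le, prodIter_pos, Hy|].
  destruct (unit_irrational_iterR j y Hy) as [Hj _].
  rewrite <- ln_1. apply ln_le; [lra|].
  rewrite <- Rinv_1. apply Rinv_le_contravar; lra.
Qed.

End InvariantOrbit.

(* Starting from [1 - t], the by-excess map needs [partial_quotient t] steps to
   pass what the Gauss map does in two steps from [t]. *)
Lemma gaussA0_run (t : R) (m : nat) : unit_irrational t -> (m < partial_quotient t)%nat ->
  iterR gaussA0 m (1 - t) = 1 - / (/ t - INR m) /\
  prodIter gaussA0 m (1 - t) = t * (/ t - INR m).
Proof.
  intros Ht. destruct (partial_quotient_spec t (proj1 Ht)) as [_ Hq].
  destruct (unit_irrational_gaussA t Ht) as [HA _]. destruct Ht as [Ht _].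
  induction m as [|m IH]; intros Hm.
  - simpl. split; field; lra.
  - destruct (IH ltac:(lia)) as [Hiter Hprod].
    assert (Hm2 : INR (S m) + 1 <= INR (partial_quotient t))
      by (rewrite <- S_INR; apply le_INR; lia).
    rewrite S_INR in *. simpl. rewrite Hiter, Hprod.
    set (d := / t - INR m) in *.
    assert (Hd : 2 < d) by (unfold d; lra).
    replace (/ t - (INR m + 1)) with (d - 1) by (unfold d; ring).
    clearbody d.
    assert (Hinv : 0 < / (d - 1) < 1)
      by (split; [apply Rinv_0_lt_compat | rewrite <- Rinv_1; apply Rinv_lt_contravar]; lra).
    split; [|field; lra].
    rewrite gaussA0_eq. unfold gaussA.
    replace (/ (1 - / d)) with (/ (d - 1) + IZR 1) by (simpl; field; lra).
    rewrite frac_add_IZR, (frac_of_bounds _ 0); simpl; lra.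
Qed.

Lemma gaussA0_run_last (t : R) : unit_irrational t ->
  iterR gaussA0 (pred (partial_quotient t)) (1 - t) = gaussA t / (1 + gaussA t) /\
  prodIter gaussA0 (pred (partial_quotient t)) (1 - t) = t * (1 + gaussA t).
Proof.
  intros Ht. destruct (partial_quotient_spec t (proj1 Ht)) as [Hq1 Hq].
  destruct (unit_irrational_gaussA t Ht) as [HA _].
  destruct (gaussA0_run t (pred (partial_quotient t)) Ht ltac:(lia)) as [Hiter Hprod].
  assert (Hpred : INR (partial_quotient t) = INR (pred (partial_quotient t)) + 1)
    by (rewrite <- S_INR, Nat.succ_pred_pos by lia; reflexivity).
  replace (/ t - INR (pred (partial_quotient t))) with (1 + gaussA t) in Hiter, Hprod
    by (rewrite <- Hq, Hpred; ring).
  split; [rewrite Hiter; field; lra | exact Hprod].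
Qed.

Lemma gaussA0_run_end (t : R) : unit_irrational t ->
  iterR gaussA0 (partial_quotient t) (1 - t) = 1 - gaussA (gaussA t) /\
  prodIter gaussA0 (partial_quotient t) (1 - t) = t * gaussA t.
Proof.
  intros Ht. destruct (partial_quotient_spec t (proj1 Ht)) as [Hq1 _].
  destruct (unit_irrational_gaussA t Ht) as [HA _].
  destruct (gaussA0_run_last t Ht) as [Hiter Hprod].
  rewrite <- (Nat.succ_pred_pos (partial_quotient t)) by lia. simpl. rewrite Hiter, Hprod.
  split; [|field; lra].
  rewrite gaussA0_eq. unfold gaussA at 1.
  replace (/ (gaussA t / (1 + gaussA t))) with (/ gaussA t + IZR 1) by (simpl; field; lra).
  rewrite frac_add_IZR. reflexivity.
Qed.

Lemma ln_le_sub_one (z : R) : 0 < z -> ln z <= z - 1.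
Proof.
  intros Hz. rewrite <- (ln_exp (z - 1)). apply ln_le; [exact Hz|].
  pose proof (exp_ineq1_le (z - 1)). lra.
Qed.

Lemma ln_nonneg (z : R) : 1 <= z -> 0 <= ln z.
Proof. intros Hz. rewrite <- ln_1. apply ln_le; lra. Qed.

Lemma gaussA0_run_term_bound (t : R) (m : nat) :
  unit_irrational t -> (S m < partial_quotient t)%nat ->
  0 <= prodIter gaussA0 m (1 - t) * log_inv (iterR gaussA0 m (1 - t)) <= 2 * t.
Proof.
  intros Ht Hm. destruct (gaussA0_run t m Ht ltac:(lia)) as [Hiter Hprod].
  destruct (partial_quotient_spec t (proj1 Ht)) as [_ Hq].
  destruct (unit_irrational_gaussA t Ht) as [HA _]. destruct Ht as [Ht _].
  assert (Hm2 : INR m + 2 <= INR (partial_quotient t))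
    by (replace 2 with (INR 2) by reflexivity; rewrite <- plus_INR; apply le_INR; lia).
  rewrite Hiter, Hprod. unfold log_inv.
  set (d := / t - INR m) in *. assert (Hd : 2 < d) by (unfold d; lra). clearbody d.
  replace (/ (1 - / d)) with (1 + / (d - 1)) by (field; lra).
  assert (Hinv : 0 < / (d - 1)) by (apply Rinv_0_lt_compat; lra).
  assert (Hln : 0 <= ln (1 + / (d - 1)) <= / (d - 1))
    by (split; [apply ln_nonneg | pose proof (ln_le_sub_one (1 + / (d - 1)))]; lra).
  assert (Hratio : d * / (d - 1) <= 2)
    by (apply (Rmult_le_reg_r (d - 1)); [lra|]; rewrite Rmult_assoc, Rinv_l; lra).
  split; [apply Rmult_le_pos; nra|].
  apply Rle_trans with (t * d * / (d - 1)); [apply Rmult_le_compat_l; nra | nra].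
Qed.

Definition run_sum (t : R) : R := orbit_sum gaussA0 log_inv 1 (1 - t) (partial_quotient t).
Definition run_defect (t : R) : R := run_sum t - t * log_inv (gaussA t).

Lemma run_defect_eq (t : R) : unit_irrational t ->
  run_defect t = orbit_sum gaussA0 log_inv 1 (1 - t) (pred (partial_quotient t))
                 + t * (1 + gaussA t) * ln (1 + gaussA t) + t * gaussA t * ln (/ gaussA t).
Proof.
  intros Ht. destruct (partial_quotient_spec t (proj1 Ht)) as [Hq1 _].
  destruct (gaussA0_run_last t Ht) as [Hiter Hprod].
  destruct (unit_irrational_gaussA t Ht) as [HA _].
  unfold run_defect, run_sum.
  rewrite <- (Nat.succ_pred_pos (partial_quotient t)) at 1 by lia.
  simpl orbit_sum. rewrite Hiter, Hprod, pow1. unfold log_inv.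
  replace (/ (gaussA t / (1 + gaussA t))) with ((1 + gaussA t) * / gaussA t) by (field; lra).
  rewrite ln_mult; [ring | lra | apply Rinv_0_lt_compat; lra].
Qed.

Lemma run_defect_bound (t : R) : unit_irrational t -> 0 <= run_defect t <= 5.
Proof.
  intros Ht. rewrite (run_defect_eq t Ht).
  destruct (partial_quotient_spec t (proj1 Ht)) as [Hq1 Hq].
  destruct (unit_irrational_gaussA t Ht) as [HA _].
  assert (Hprefix : 0 <= orbit_sum gaussA0 log_inv 1 (1 - t) (pred (partial_quotient t))
                       <= 2 * INR (pred (partial_quotient t)) * t).
  { assert (Hterms : forall m, (m <= pred (partial_quotient t))%nat ->
        0 <= orbit_sum gaussA0 log_inv 1 (1 - t) m <= 2 * INR m * t).
    { induction m as [|m IH]; intros Hm; simpl orbit_sum; [simpl; lra|].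
      destruct (IH ltac:(lia)). rewrite pow1, Rmult_1_l.
      destruct (gaussA0_run_term_bound t m Ht ltac:(lia)). rewrite S_INR. lra. }
    apply Hterms. lia. }
  destruct Ht as [Ht _].
  assert (Hqt : INR (pred (partial_quotient t)) * t <= 1).
  { assert (INR (pred (partial_quotient t)) <= / t)
      by (apply Rle_trans with (INR (partial_quotient t)); [apply le_INR; lia | lra]).
    apply (Rmult_le_compat_r t) in H; [|lra]. rewrite Rinv_l in H; lra. }
  assert (Hln1 : 0 <= ln (1 + gaussA t) <= gaussA t)
    by (split; [apply ln_nonneg | pose proof (ln_le_sub_one (1 + gaussA t))]; lra).
  assert (HinvA : 1 < / gaussA t) by (rewrite <- Rinv_1; apply Rinv_lt_contravar; lra).
  assert (Hln2 : 0 <= ln (/ gaussA t) <= / gaussA t - 1)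
    by (split; [apply ln_nonneg | apply ln_le_sub_one]; lra).
  assert (Hlast : t * gaussA t * (/ gaussA t - 1) = t * (1 - gaussA t)) by (field; lra).
  assert (0 <= t * (1 + gaussA t) * ln (1 + gaussA t) <= 2)
    by (split; [apply Rmult_le_pos | apply Rle_trans with (t * (1 + gaussA t) * gaussA t);
                [apply Rmult_le_compat_l|]]; nra).
  assert (0 <= t * gaussA t * ln (/ gaussA t) <= 1)
    by (split; [apply Rmult_le_pos | apply Rle_trans with (t * gaussA t * (/ gaussA t - 1));
                [apply Rmult_le_compat_l|]]; nra).
  lra.
Qed.

Fixpoint runs_length (k : nat) (t : R) : nat :=
  match k with
  | O => O
  | S k' => (partial_quotient t + runs_length k' (gaussA (gaussA t)))%nat
  end.

Definition runs_sum (t : R) (k : nat) : R :=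
  orbit_sum gaussA0 log_inv 1 (1 - t) (runs_length k t).

Lemma runs_sum_succ (t : R) (k : nat) : unit_irrational t ->
  runs_sum t (S k) = run_sum t + t * gaussA t * runs_sum (gaussA (gaussA t)) k.
Proof.
  intros Ht. unfold runs_sum, run_sum. simpl runs_length.
  rewrite orbit_sum_add, pow1, Rmult_1_l.
  destruct (gaussA0_run_end t Ht) as [-> ->]. reflexivity.
Qed.

Lemma runs_length_ge (k : nat) (t : R) : unit_irrational t -> (k <= runs_length k t)%nat.
Proof.
  revert t. induction k as [|k IH]; intros t Ht; simpl; [lia|].
  destruct (partial_quotient_spec t (proj1 Ht)) as [Hq _].
  pose proof (IH _ (unit_irrational_gaussA _ (unit_irrational_gaussA _ Ht))). lia.
Qed.

Lemma div2_succ_succ (n : nat) : (S (S n) / 2 = S (n / 2))%nat.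
Proof. replace (S (S n)) with (n + 1 * 2)%nat by lia. rewrite Nat.div_add; lia. Qed.

(* [y] contributes the even Gauss steps, [1 - y] the odd ones. *)
Lemma runs_sum_alternating (s : R) (n : nat) (y : R) : s * s = 1 -> unit_irrational y ->
  log_inv y + y * runs_sum (gaussA y) (n / 2) + s * runs_sum y (S n / 2)
  = orbit_sum gaussA log_inv s y (S n) + s * orbit_sum gaussA run_defect s y n.
Proof.
  intros Hs. revert y. induction n as [|n IH]; intros y Hy.
  - unfold runs_sum. simpl. ring.
  - rewrite div2_succ_succ, (runs_sum_succ y) by exact Hy.
    rewrite (orbit_sum_succ gaussA log_inv s y (S n)), (orbit_sum_succ gaussA run_defect s y n).
    pose proof (IH (gaussA y) (unit_irrational_gaussA y Hy)) as IHA.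
    assert (HOA : orbit_sum gaussA log_inv s (gaussA y) (S n)
      = log_inv (gaussA y) + gaussA y * runs_sum (gaussA (gaussA y)) (n / 2)
        + s * runs_sum (gaussA y) (S n / 2) - s * orbit_sum gaussA run_defect s (gaussA y) n)
      by lra.
    rewrite HOA. unfold run_defect.
    rewrite <- (Rmult_1_l (y * runs_sum (gaussA y) (S n / 2))), <- Hs. ring.
Qed.

Lemma Rabs_sign (s : R) : s * s = 1 -> Rabs s = 1.
Proof.
  intros Hs. pose proof (Rabs_pos s).
  assert (Rabs s * Rabs s = 1) by (rewrite <- Rabs_mult, Hs; apply Rabs_R1). nra.
Qed.

Lemma Rabs_add_sign_mul_le (u v s z : R) : s * s = 1 -> 0 <= z ->
  Rabs (u + s * z * v) <= Rabs u + z * Rabs v.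
Proof.
  intros Hs Hz. eapply Rle_trans; [apply Rabs_triang|].
  rewrite !Rabs_mult, (Rabs_sign s Hs), (Rabs_pos_eq z Hz). lra.
Qed.

(* Two Gauss steps shrink the weight by [y * A y <= 1/2], so sums over the Gauss
   orbit of a bounded function stay bounded, whatever the signs. *)
Lemma orbit_sum_gaussA_bound (g : R -> R) (s K : R) (n : nat) (y : R) :
  s * s = 1 -> (forall z, unit_irrational z -> Rabs (g z) <= K) -> unit_irrational y ->
  Rabs (orbit_sum gaussA g s y n) <= 4 * K.
Proof.
  intros Hs Hg Hy.
  assert (HK : 0 <= K) by (pose proof (Hg y Hy); pose proof (Rabs_pos (g y)); lra).
  revert n y Hy. enough (Hpair : forall n y, unit_irrational y ->
    Rabs (orbit_sum gaussA g s y n) <= 4 * K /\ Rabs (orbit_sum gaussA g s y (S n)) <= 4 * K)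
    by (intros n y Hy; apply Hpair, Hy).
  intros n; induction n as [|n IH]; intros y Hy.
  - simpl orbit_sum. rewrite Rabs_R0. replace (0 + 1 * 1 * g y) with (g y) by ring.
    pose proof (Hg y Hy). lra.
  - split; [apply IH, Hy|].
    pose proof (unit_irrational_gaussA y Hy) as HyA.
    destruct (IH _ (unit_irrational_gaussA _ HyA)) as [Hw _].
    pose proof (mul_gaussA_le_half y (proj1 Hy)) as Hhalf.
    pose proof (Hg y Hy). pose proof (Hg _ HyA).
    destruct Hy as [Hy _]. destruct HyA as [HyA _].
    rewrite 2!orbit_sum_succ.
    eapply Rle_trans; [apply Rabs_add_sign_mul_le; [exact Hs | lra]|].
    pose proof (Rabs_add_sign_mul_le (g (gaussA y))
                  (orbit_sum gaussA g s (gaussA (gaussA y)) n) s (gaussA y) Hs ltac:(lra)).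
    pose proof (Rabs_pos (orbit_sum gaussA g s (gaussA (gaussA y)) n)).
    nra.
Qed.

Lemma sum_n_le_mono (u : nat -> R) (m m' : nat) : (forall j, 0 <= u j) -> (m <= m')%nat ->
  sum_n u m <= sum_n u m'.
Proof.
  intros Hu Hm. induction Hm as [|m' _ IH]; [lra|].
  rewrite sum_Sn. pose proof (Hu (S m')). unfold plus. simpl. lra.
Qed.

Lemma sum_n_nonneg (u : nat -> R) (m : nat) : (forall j, 0 <= u j) -> 0 <= sum_n u m.
Proof.
  intros Hu. apply Rle_trans with (sum_n u 0); [rewrite sum_O; apply Hu|].
  apply sum_n_le_mono; [exact Hu | lia].
Qed.

Lemma sum_n_le_Series (u : nat -> R) (m : nat) : (forall j, 0 <= u j) -> ex_series u ->
  sum_n u m <= Series u.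
Proof.
  intros Hu Hex. apply is_lim_seq_incr_compare; [apply Series_correct, Hex|].
  intros n. apply sum_n_le_mono; [exact Hu | lia].
Qed.

Lemma ex_series_of_bounded (u : nat -> R) (M : R) : (forall j, 0 <= u j) ->
  (forall m, sum_n u m <= M) -> ex_series u.
Proof.
  intros Hu HM. destruct (ex_finite_lim_seq_incr (sum_n u) M) as [l Hl]; [|exact HM|].
  - intros n. apply sum_n_le_mono; [exact Hu | lia].
  - exists l. exact Hl.
Qed.

Lemma is_lim_seq_dist_le (u v : nat -> R) (l m K : R) :
  is_lim_seq u l -> is_lim_seq v m -> (forall n, Rabs (u n - v n) <= K) -> Rabs (l - m) <= K.
Proof.
  intros Hu Hv HK. pose proof (is_lim_seq_minus' u v l m Hu Hv) as Hd.
  assert (Hup : Rbar_le (l - m) K).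
  { apply (is_lim_seq_le (fun n => u n - v n) (fun _ => K)); [|exact Hd | apply is_lim_seq_const].
    intros n. pose proof (HK n) as Hn. apply Rabs_le_between in Hn. lra. }
  assert (Hlo : Rbar_le (- K) (l - m)).
  { apply (is_lim_seq_le (fun _ => - K) (fun n => u n - v n)); [|apply is_lim_seq_const | exact Hd].
    intros n. pose proof (HK n) as Hn. apply Rabs_le_between in Hn. lra. }
  simpl in Hup, Hlo. apply Rabs_le. lra.
Qed.

Lemma is_lim_seq_sum_n_subseq (u : nat -> R) (phi : nat -> nat) :
  filterlim phi eventually eventually -> ex_series u ->
  is_lim_seq (fun n => sum_n u (phi n)) (Series u).
Proof. intros Hphi Hex. apply is_lim_seq_subseq; [exact Hphi | apply Series_correct, Hex]. Qed.

Lemma filterlim_of_half_le (phi : nat -> nat) : (forall n, (n / 2 <= phi n)%nat) ->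
  filterlim phi eventually eventually.
Proof.
  intros Hphi P [N HN]. exists (2 * N)%nat. intros n Hn. apply HN.
  apply Nat.le_trans with (n / 2)%nat; [|apply Hphi].
  apply Nat.div_le_lower_bound; lia.
Qed.

Lemma filterlim_unbounded (phi : nat -> nat) (m : nat) :
  filterlim phi eventually eventually -> exists n, (m <= phi n)%nat.
Proof.
  intros Hphi. destruct (Hphi (fun k => (m <= k)%nat)) as [N HN]; [exists m; auto|].
  exists N. apply HN. lia.
Qed.

Lemma Series_dist_of_partial_sums (a b c e : nat -> R) (phi psi : nat -> nat) (s K : R) :
  ex_series a -> ex_series b -> ex_series c ->
  filterlim phi eventually eventually -> filterlim psi eventually eventually ->
  (forall n, sum_n a (phi n) + s * sum_n b (psi n) = sum_n c (S n) + e n) ->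
  (forall n, Rabs (e n) <= K) ->
  Rabs (Series c - (Series a + s * Series b)) <= K.
Proof.
  intros Ha Hb Hc Hphi Hpsi Hsum HK.
  apply (is_lim_seq_dist_le (fun n => sum_n c (S n))
           (fun n => sum_n a (phi n) + s * sum_n b (psi n))).
  - apply is_lim_seq_sum_n_subseq; [apply eventually_subseq; auto | exact Hc].
  - apply is_lim_seq_plus'; [|apply is_lim_seq_mult'; [apply is_lim_seq_const|]];
      apply is_lim_seq_sum_n_subseq; assumption.
  - intros n. rewrite Hsum. replace (sum_n c (S n) - (sum_n c (S n) + e n)) with (- e n) by ring.
    rewrite Rabs_Ropp. apply HK.
Qed.

Section NonnegativeComparison.

Variables (a b c e : nat -> R) (phi psi : nat -> nat) (K : R).
Hypotheses (a_nonneg : forall j, 0 <= a j) (b_nonneg : forall j, 0 <= b j)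
  (c_nonneg : forall j, 0 <= c j).
Hypotheses (phi_infty : filterlim phi eventually eventually)
  (psi_infty : filterlim psi eventually eventually).
Hypothesis sum_identity : forall n, sum_n a (phi n) + sum_n b (psi n) = sum_n c (S n) + e n.
Hypothesis e_bound : forall n, Rabs (e n) <= K.

Lemma e_le (n : nat) : - K <= e n <= K.
Proof. apply Rabs_le_between, e_bound. Qed.

Lemma ex_series_add_iff : ex_series c <-> ex_series a /\ ex_series b.
Proof.
  split.
  - intros Hc.
    assert (Hbound : forall n, sum_n a (phi n) + sum_n b (psi n) <= Series c + K).
    { intros n. rewrite sum_identity. pose proof (e_le n).
      pose proof (sum_n_le_Series c (S n) c_nonneg Hc). lra. }
    split; apply (ex_series_of_bounded _ (Series c + K)); try assumption; intros m.
    + destruct (filterlim_unbounded phi m phi_infty) as [n Hn].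
      pose proof (sum_n_le_mono a m (phi n) a_nonneg Hn).
      pose proof (sum_n_nonneg b (psi n) b_nonneg). pose proof (Hbound n). lra.
    + destruct (filterlim_unbounded psi m psi_infty) as [n Hn].
      pose proof (sum_n_le_mono b m (psi n) b_nonneg Hn).
      pose proof (sum_n_nonneg a (phi n) a_nonneg). pose proof (Hbound n). lra.
  - intros [Ha Hb]. apply (ex_series_of_bounded _ (Series a + Series b + K)); [exact c_nonneg|].
    intros m. pose proof (sum_n_le_mono c m (S m) c_nonneg ltac:(lia)).
    pose proof (sum_identity m). pose proof (e_le m).
    pose proof (sum_n_le_Series a (phi m) a_nonneg Ha).
    pose proof (sum_n_le_Series b (psi m) b_nonneg Hb). lra.
Qed.

Lemma Series_add_dist : ex_series c -> Rabs (Series c - (Series a + Series b)) <= K.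
Proof.
  intros Hc. destruct (proj1 ex_series_add_iff Hc) as [Ha Hb].
  rewrite <- (Rmult_1_l (Series b)).
  apply (Series_dist_of_partial_sums a b c e phi psi); try assumption.
  intros n. rewrite Rmult_1_l. apply sum_identity.
Qed.

End NonnegativeComparison.

Definition B0_cut (x : R) (n : nat) : nat := runs_length (S n / 2) (gaussA (frac x)).
Definition B0_opp_cut (x : R) (n : nat) : nat := pred (runs_length (S (S n) / 2) (frac x)).
Definition defect_sum (s x : R) (n : nat) : R := s * orbit_sum gaussA run_defect s (frac x) (S n).

Lemma sum_n_B0_term (x : R) (m : nat) :
  sum_n (B0_term x) m = orbit_sum gaussA0 log_inv 1 (frac x) (S m).
Proof.
  rewrite <- sum_n_brjuno_term. apply sum_n_ext. intros j. rewrite pow1, Rmult_1_l. reflexivity.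
Qed.

Lemma B0_pair_partial_sums (s x : R) (n : nat) : s * s = 1 -> irrational x ->
  sum_n (B0_term x) (B0_cut x n) + s * sum_n (B0_term (- x)) (B0_opp_cut x n)
  = sum_n (fun j => s ^ j * B_term x j) (S n) + defect_sum s x n.
Proof.
  intros Hs Hx. pose proof (unit_irrational_frac x Hx) as Hy.
  assert (Hlen : (1 <= runs_length (S (S n) / 2) (frac x))%nat)
    by (rewrite div2_succ_succ; pose proof (runs_length_ge (S (n / 2)) _ Hy); lia).
  unfold B0_cut, B0_opp_cut, defect_sum, B_term.
  rewrite 2!sum_n_B0_term, frac_opp, Nat.succ_pred_pos, orbit_sum_succ, gaussA0_eq by assumption.
  rewrite Rmult_1_l, sum_n_brjuno_term, <- runs_sum_alternating by assumption.
  reflexivity.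
Qed.

Lemma B0_pair_partial_sums_add (x : R) (n : nat) : irrational x ->
  sum_n (B0_term x) (B0_cut x n) + sum_n (B0_term (- x)) (B0_opp_cut x n)
  = sum_n (B_term x) (S n) + defect_sum 1 x n.
Proof.
  intros Hx. rewrite <- (Rmult_1_l (sum_n (B0_term (- x)) _)), B0_pair_partial_sums by (ring || exact Hx).
  f_equal. apply sum_n_ext. intros j. rewrite pow1. apply Rmult_1_l.
Qed.

Lemma defect_sum_bound (s x : R) (n : nat) : s * s = 1 -> irrational x ->
  Rabs (defect_sum s x n) <= 20.
Proof.
  intros Hs Hx. unfold defect_sum. rewrite Rabs_mult, Rabs_sign, Rmult_1_l by exact Hs.
  replace 20 with (4 * 5) by ring.
  apply orbit_sum_gaussA_bound; [exact Hs | | apply unit_irrational_frac, Hx].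
  intros z Hz. apply Rabs_le. pose proof (run_defect_bound z Hz). lra.
Qed.

Lemma B0_cut_infty (x : R) : irrational x -> filterlim (B0_cut x) eventually eventually.
Proof.
  intros Hx. apply filterlim_of_half_le. intros n. unfold B0_cut.
  pose proof (runs_length_ge (S n / 2) _ (unit_irrational_gaussA _ (unit_irrational_frac x Hx))).
  pose proof (Nat.Div0.div_le_mono n (S n) 2 ltac:(lia)). lia.
Qed.

Lemma B0_opp_cut_infty (x : R) : irrational x -> filterlim (B0_opp_cut x) eventually eventually.
Proof.
  intros Hx. apply filterlim_of_half_le. intros n. unfold B0_opp_cut.
  pose proof (runs_length_ge (S (S n) / 2) _ (unit_irrational_frac x Hx)).
  rewrite div2_succ_succ in *. lia.
Qed.

Lemma B_term_nonneg (x : R) (j : nat) : irrational x -> 0 <= B_term x j.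
Proof.
  intros Hx. apply brjuno_term_nonneg; [exact unit_irrational_gaussA | apply unit_irrational_frac, Hx].
Qed.

Lemma B0_term_nonneg (x : R) (j : nat) : irrational x -> 0 <= B0_term x j.
Proof.
  intros Hx. apply brjuno_term_nonneg; [exact unit_irrational_gaussA0 | apply unit_irrational_frac, Hx].
Qed.

Lemma W_converges_of_B_finite (x : R) : irrational x -> B_finite x -> W_converges x.
Proof.
  intros Hx HB. apply ex_series_Rabs, (ex_series_ext (B_term x)); [|exact HB].
  intros j. unfold W_term. rewrite Rabs_mult, pow_1_abs, Rmult_1_l, Rabs_pos_eq; [reflexivity|].
  apply B_term_nonneg, Hx.
Qed.

Theorem theorem1 :
  exists Cp Cm : R, 0 < Cp /\ 0 < Cm /\
  forall x : R, irrational x ->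
    ((B_finite x <-> (B0_finite x /\ B0_finite (- x))) /\
     (B_finite x -> Rabs (Bval x - 2 * B0plus x) <= Cp)) /\
    (B0_finite x -> B0_finite (- x) ->
       W_converges x /\ Rabs (Wval x - 2 * B0minus x) <= Cm).
Proof.
  exists 20, 20. split; [lra|]. split; [lra|]. intros x Hx.
  pose proof (fun j => B_term_nonneg x j Hx) as HB.
  pose proof (fun j => B0_term_nonneg x j Hx) as HB0.
  pose proof (fun j => B0_term_nonneg (- x) j (irrational_opp x Hx)) as HB0opp.
  pose proof (B0_cut_infty x Hx) as Hcut. pose proof (B0_opp_cut_infty x Hx) as Hcut_opp.
  pose proof (fun n => B0_pair_partial_sums_add x n Hx) as Hadd.
  pose proof (fun n => defect_sum_bound 1 x n ltac:(ring) Hx) as Hdef.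
  pose proof (ex_series_add_iff _ _ _ _ _ _ _ HB0 HB0opp HB Hcut Hcut_opp Hadd Hdef) as Hiff.
  unfold Bval, Wval, B0plus, B0minus, B0val.
  split; [split; [exact Hiff|] |].
  - intros Hfin. replace (2 * ((Series (B0_term x) + Series (B0_term (- x))) / 2))
      with (Series (B0_term x) + Series (B0_term (- x))) by field.
    exact (Series_add_dist _ _ _ _ _ _ _ HB0 HB0opp HB Hcut Hcut_opp Hadd Hdef Hfin).
  - intros Hfin Hfin_opp.
    pose proof (W_converges_of_B_finite x Hx (proj2 Hiff (conj Hfin Hfin_opp))) as HW.
    split; [exact HW|].
    replace (2 * ((Series (B0_term x) - Series (B0_term (- x))) / 2))
      with (Series (B0_term x) + -1 * Series (B0_term (- x))) by field.
    apply (Series_dist_of_partial_sums _ _ _ (defect_sum (-1) x) (B0_cut x) (B0_opp_cut x));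
      try assumption.
    + intros n. apply B0_pair_partial_sums; [ring | exact Hx].
    + intros n. apply defect_sum_bound; [ring | exact Hx].
Qed.
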